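(* Let $\mathcal S=\mathbb C[s,s^{-1},(s-1)^{-1}]$ (the ring of rational functions in $s$ over $\mathbb C$ whose only possible poles in $\mathbb C$ are at $s=0$ and $s=1$), let $\mathcal R=\mathbb C[t,t^{-1},u]/(u^2-t^2-4t)$, and for a fixed $a\in\mathbb C$ with $a\neq 0$ let $\mathcal A=\mathcal A_a=\mathbb C[(z^2-a^2)^k,\ z(z^2-a^2)^k \mid k\in\mathbb Z]$ be the subalgebra of the field $\mathbb C(z)$ generated by the elements $(z^2-a^2)^k$ and $z(z^2-a^2)^k$ for $k\in\mathbb Z$. Then: (1) There is a ring isomorphism $\mathcal R\to\mathcal S$ given by $t\mapsto s^{-1}(s-1)^2$ and $u\mapsto s-s^{-1}$. (2) The rings $\mathcal R$ and $\mathcal A$ are isomorphic.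
   Context: All rings are commutative $\mathbb C$-algebras; in $\mathcal R$ the element $t$ is invertible and $u$ satisfies $u^2=t^2+4t$. *)

From HB Require Import structures.
From mathcomp Require Import all_boot all_order all_algebra.
From mathcomp Require Import reals.
From mathcomp Require Import complex.
From mathcomp Require Import mpoly.

Set Implicit Arguments.
Unset Strict Implicit.
Unset Printing Implicit Defensive.

Import Order.TTheory GRing.Theory Num.Theory.
Local Open Scope ring_scope.

(* The complex numbers: C = R[i] for R : realType (any realType is a model
   of the real numbers). *)

(* Indices of the three generators of C[T, W, U]:
   T stands for t, W for t^{-1}, U for u. *)
Definition iT : 'I_3 := @Ordinal 3 0 isT.
Definition iW : 'I_3 := @Ordinal 3 1 isT.
Definition iU : 'I_3 := @Ordinal 3 2 isT.

(* The defining ideal I = (T*W - 1, U^2 - T^2 - 4T) of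
   R = C[t, t^{-1}, u]/(u^2 - t^2 - 4t) = C[T, W, U]/I, as a Prop-valued
   membership predicate: p lies in the ideal generated by the two relations. *)
Definition in_R_ideal (K : comNzRingType) (p : {mpoly K[3]}) : Prop :=
  exists q r : {mpoly K[3]},
    p = q * ('X_iT * 'X_iW - 1) + r * ('X_iU ^+ 2 - 'X_iT ^+ 2 - 4%:R *: 'X_iT).

Definition in_gen_subalg (F : fieldType) (L : comNzRingType) (emb : F -> L)
    (gen : L -> Prop) (x : L) : Prop :=
  forall P : L -> Prop,
    (forall c, P (emb c)) ->
    (forall g, gen g -> P g) ->
    (forall y z, P y -> P z -> P (y + z)) ->
    (forall y, P y -> P (- y)) ->
    (forall y z, P y -> P z -> P (y * z)) ->
    P x.

Definition cst (C : idomainType) (c : C) : {fraction {poly C}} := FracField.tofrac (c%:P).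

(* The variable s (resp. z) of C(s) (resp. C(z)). *)
Definition var (C : idomainType) : {fraction {poly C}} := FracField.tofrac 'X.

Definition S_gen (C : fieldType) (x : {fraction {poly C}}) : Prop :=
  x = var C \/ x = (var C)^-1 \/ x = (var C - 1)^-1.
Definition in_S (C : fieldType) (x : {fraction {poly C}}) : Prop :=
  in_gen_subalg (@cst C) (@S_gen C) x.

Definition A_gen (C : fieldType) (a : C) (x : {fraction {poly C}}) : Prop :=
  exists k : int,
    x = (var C ^+ 2 - cst (a ^+ 2)) ^ k \/
    x = var C * (var C ^+ 2 - cst (a ^+ 2)) ^ k.
Definition in_A (C : fieldType) (a : C) (x : {fraction {poly C}}) : Prop :=
  in_gen_subalg (@cst C) (A_gen a) x.

Definition phi_gen (C : fieldType) (i : 'I_3) : {fraction {poly C}} :=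
  if i == iT then (var C)^-1 * (var C - 1) ^+ 2
  else if i == iW then var C * ((var C - 1) ^+ 2)^-1
  else var C - (var C)^-1.
Definition phi (C : fieldType) (p : {mpoly C[3]}) : {fraction {poly C}} :=
  mmap (@cst C) (@phi_gen C) p.

From HB Require Import structures.
From mathcomp Require Import all_boot all_order all_algebra.
From mathcomp Require Import reals complex mpoly.
From mathcomp Require Import ring.
Import GRing.Theory Num.Theory.
Local Open Scope ring_scope.
Set Implicit Arguments. Unset Strict Implicit. Unset Printing Implicit Defensive.

(* Modulo the ideal, W = T^-1 and U^2 = T^2 + 4T, so every class has the form
   T^-d (f0(T) + U f1(T)).  Under t |-> s^-1 (s-1)^2, u |-> s - s^-1 both
   relations hold and t is transcendental over C; a relation
   f0(t) + u f1(t) = 0 would give f0^2 = (X^2 + 4X) f1^2, and since X^2 + 4X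
   vanishes to order exactly one at 0, infinite descent forces f1 = f0 = 0.
   So the kernel is the ideal.  The image is C[s, s^-1, (s-1)^-1], because
   s and s^-1 are (t + 2 +- u)/2 and (s-1)^-1 = (1 - s^-1) t^-1.
   For A_a put s = (z + a)/2a: then z = 2a s - a and
   z^2 - a^2 = 4a^2 s (s - 1), so each algebra contains the generators of
   the other. *)

Lemma mpoly_ind (n : nat) (R : nzRingType) (P : {mpoly R[n]} -> Prop) :
  (forall c, P c%:MP) -> (forall i, P 'X_i) ->
  (forall p q, P p -> P q -> P (p + q)) ->
  (forall p q, P p -> P q -> P (p * q)) ->
  forall p, P p.
Proof.
move=> PC PX PD PM p; rewrite (mpolyE p); apply: big_ind => //.
  by rewrite -mpolyC0.
move=> m _; rewrite -mul_mpolyC mpolyXE_id; apply: (PM) => //.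
have P1 : P 1 by rewrite -mpolyC1.
apply: big_ind => // i _.
by elim: (m i) => [|k IHk]; rewrite ?expr0 // exprS; apply: PM.
Qed.

Definition polyT (C : comNzRingType) : {poly C} -> {mpoly C[3]} :=
  horner_morph (fun c : C => mulrC 'X_iT c%:MP).
HB.instance Definition _ (C : comNzRingType) :=
  GRing.RMorphism.copy (@polyT C) (horner_morph (fun c : C => mulrC 'X_iT c%:MP)).

Lemma polyTX (C : comNzRingType) : polyT 'X = 'X_iT :> {mpoly C[3]}.
Proof. exact: horner_morphX. Qed.

Lemma polyTC (C : comNzRingType) (c : C) : polyT c%:P = c%:MP.
Proof. exact: horner_morphC. Qed.

Section RIdeal.
Variable C : comNzRingType.
Local Notation T := ('X_iT : {mpoly C[3]}).
Local Notation W := ('X_iW : {mpoly C[3]}).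
Local Notation U := ('X_iU : {mpoly C[3]}).
Implicit Types p q : {mpoly C[3]}.

Lemma in_R_ideal0 : in_R_ideal (0 : {mpoly C[3]}).
Proof. by exists 0, 0; rewrite !mul0r addr0. Qed.

Lemma in_R_idealD p q : in_R_ideal p -> in_R_ideal q -> in_R_ideal (p + q).
Proof. by move=> [a [b ->]] [c [d ->]]; exists (a + c), (b + d); ring. Qed.

Lemma in_R_idealMl q p : in_R_ideal p -> in_R_ideal (q * p).
Proof. by move=> [a [b ->]]; exists (q * a), (q * b); ring. Qed.

Lemma in_R_ideal_TW : in_R_ideal (T * W - 1).
Proof. by exists 1, 0; rewrite mul1r mul0r addr0. Qed.

Lemma in_R_ideal_U : in_R_ideal (U ^+ 2 - T ^+ 2 - 4%:R *: T).
Proof. by exists 0, 1; rewrite mul1r mul0r add0r. Qed.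

Definition eqmodR p q := in_R_ideal (p - q).

Lemma eqmodR_refl p : eqmodR p p.
Proof. by rewrite /eqmodR subrr; apply: in_R_ideal0. Qed.

Lemma eqmodR_trans p q r : eqmodR p q -> eqmodR q r -> eqmodR p r.
Proof. by move=> Hpq Hqr; have := in_R_idealD Hpq Hqr; rewrite /eqmodR addrA subrK. Qed.

Lemma eqmodRD p q p' q' : eqmodR p q -> eqmodR p' q' -> eqmodR (p + p') (q + q').
Proof. by move=> H H'; have := in_R_idealD H H'; rewrite /eqmodR; congr in_R_ideal; ring. Qed.

Lemma eqmodRM p q p' q' : eqmodR p q -> eqmodR p' q' -> eqmodR (p * p') (q * q').
Proof.
move=> H H'; have := in_R_idealD (in_R_idealMl p' H) (in_R_idealMl q H').
by rewrite /eqmodR; congr in_R_ideal; ring.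
Qed.

Lemma eqmodR_TWn d : eqmodR ((T * W) ^+ d) 1.
Proof.
elim: d => [|d IHd]; first by rewrite expr0; apply: eqmodR_refl.
by rewrite exprS -(mulr1 1); apply: eqmodRM => //; apply: in_R_ideal_TW.
Qed.

Lemma in_R_ideal_cancelTn d p : in_R_ideal (T ^+ d * p) -> in_R_ideal p.
Proof.
move=> HTp; have HTWp := in_R_idealMl (- p) (eqmodR_TWn d).
have := in_R_idealD HTWp (in_R_idealMl (W ^+ d) HTp).
by congr in_R_ideal; rewrite exprMn; ring.
Qed.

Definition R_normal_form p :=
  exists d f0 f1, eqmodR (T ^+ d * p) (polyT f0 + U * polyT f1).

Lemma R_normal_formD p q :
  R_normal_form p -> R_normal_form q -> R_normal_form (p + q).
Proof.
move=> [d [f0 [f1 Hp]]] [e [g0 [g1 Hq]]].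
exists (d + e)%N, ('X ^+ e * f0 + 'X ^+ d * g0), ('X ^+ e * f1 + 'X ^+ d * g1).
have := eqmodRD (eqmodRM (eqmodR_refl (T ^+ e)) Hp) (eqmodRM (eqmodR_refl (T ^+ d)) Hq).
rewrite !rmorphD !rmorphM !rmorphXn /= polyTX exprD.
by congr in_R_ideal; ring.
Qed.

Lemma R_normal_formM p q :
  R_normal_form p -> R_normal_form q -> R_normal_form (p * q).
Proof.
move=> [d [f0 [f1 Hp]]] [e [g0 [g1 Hq]]].
exists (d + e)%N, (f0 * g0 + ('X ^+ 2 + 4%:R *: 'X) * f1 * g1), (f0 * g1 + f1 * g0).
have -> : T ^+ (d + e) * (p * q) = T ^+ d * p * (T ^+ e * q) by rewrite exprD; ring.
apply: eqmodR_trans (eqmodRM Hp Hq) _.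
have := in_R_idealMl (polyT f1 * polyT g1) in_R_ideal_U.
rewrite /eqmodR; congr in_R_ideal.
rewrite !rmorphD !rmorphM -mul_polyC rmorphD !rmorphM /= polyTC polyTX.
by rewrite -mul_mpolyC; ring.
Qed.

Lemma R_normal_form_all p : R_normal_form p.
Proof.
elim/mpoly_ind: p => [c|i|p q|p q]; last 2 first.
- exact: R_normal_formD.
- exact: R_normal_formM.
- by exists 0%N, c%:P, 0; rewrite rmorph0 polyTC mulr0 addr0 mul1r; apply: eqmodR_refl.
have : (i == iT) || (i == iW) || (i == iU) by case: i => -[|[|[|]]].
case/orP => [/orP [] |] /eqP ->.
- by exists 0%N, 'X, 0; rewrite rmorph0 polyTX mulr0 addr0 mul1r; apply: eqmodR_refl.
- by exists 1%N, 1, 0; rewrite rmorph0 rmorph1 mulr0 addr0 expr1; apply: in_R_ideal_TW.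
- by exists 0%N, 0, 1; rewrite rmorph0 rmorph1 mulr1 add0r mul1r; apply: eqmodR_refl.
Qed.

End RIdeal.

Section NonSquare.
Variable C : idomainType.
Hypothesis C2 : (2%:R : C) != 0.

Lemma horner0_mulX (p : {poly C}) : p.[0] = 0 -> exists q, p = q * 'X.
Proof.
move=> p0; have /factor_theorem [q ->] : root p 0 by apply/eqP.
by exists q; rewrite subr0.
Qed.

Lemma X2_4X_nonsquare (f0 f1 : {poly C}) :
  f0 ^+ 2 = ('X ^+ 2 + 4%:R *: 'X) * f1 ^+ 2 -> f1 = 0.
Proof.
have [n] := ubnP (size f1); elim: n f0 f1 => // n IHn f0 f1 lt_f1n E.
have X_neq0 : ('X : {poly C}) != 0 by rewrite polyX_eq0.
have C4 : (4%:R : C) != 0 by rewrite (natrM C 2 2) mulf_neq0.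
have [g f0E] : exists g, f0 = g * 'X.
  apply: horner0_mulX; apply/eqP; have := congr1 (horner^~ 0) E.
  rewrite !hornerE /= expr0n /= !mul0r => /eqP.
  by rewrite expf_eq0.
have Eg : g ^+ 2 * 'X = ('X + 4%:R%:P) * f1 ^+ 2.
  apply: (mulIf X_neq0); rewrite -mulrA -[_ * 'X]expr2 -exprMn -f0E E -mul_polyC.
  by ring.
have [h f1E] : exists h, f1 = h * 'X.
  apply: horner0_mulX; apply/eqP; have := congr1 (horner^~ 0) Eg.
  rewrite !hornerE /= => /esym/eqP.
  by rewrite -mulrA mulf_eq0 (negbTE C4) mulf_eq0 orbb.
have Eh : g ^+ 2 = ('X ^+ 2 + 4%:R *: 'X) * h ^+ 2.
  by apply: (mulIf X_neq0); rewrite Eg f1E -mul_polyC; ring.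
rewrite f1E; have [-> | h_neq0] := eqVneq h 0; first by rewrite mul0r.
by move: lt_f1n; rewrite f1E size_mulX // ltnS => /(IHn g h) /(_ Eh) ->; rewrite mul0r.
Qed.

End NonSquare.

Section MmapRmorph.
Variables (n : nat) (R : nzRingType) (S : comNzRingType).
Variables (f : {rmorphism R -> S}) (h : 'I_n -> S).

Lemma mmapXi i : mmap f h 'X_i = h i.
Proof. by rewrite mmapX mmap1U. Qed.

(* [mmapC] with [f] seen through its ring-morphism structure, so that
   rewriting with [fmorphV] or [rmorph_nat] applies afterwards. *)
Lemma mmapC_rmorph c : mmap f h c%:MP = f c.
Proof. exact: mmapC. Qed.

End MmapRmorph.

Section Kernel.
Variables (C : idomainType) (L : comNzRingType) (emb : {rmorphism C -> L}).
Variable g : 'I_3 -> L.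
Hypothesis C2 : (2%:R : C) != 0.
Hypothesis gTW : g iT * g iW = 1.
Hypothesis gU : g iU ^+ 2 = g iT ^+ 2 + 4%:R * g iT.
Hypothesis gT_transcendental :
  forall F : {poly C}, (map_poly emb F).[g iT] = 0 -> F = 0.
Local Notation psi := (mmap emb g).

Lemma mmap_polyT f : psi (polyT f) = (map_poly emb f).[g iT].
Proof.
rewrite /polyT /horner_morph -horner_map /= mmapXi -map_poly_comp.
by congr _.[_]; apply: eq_map_poly => c /=; exact: mmapC_rmorph.
Qed.

Lemma mmap_R_ideal p : in_R_ideal p -> psi p = 0.
Proof.
move=> [q [r ->]]; rewrite -mul_mpolyC.
rewrite rmorphD !rmorphM !rmorphB rmorph1 !rmorphXn !rmorphM /=.
by rewrite mmapC_rmorph rmorph_nat !mmapXi gTW gU; ring.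
Qed.

Lemma polyT_mmap_eq0 f0 f1 :
  psi (polyT f0 + 'X_iU * polyT f1) = 0 -> f0 = 0 /\ f1 = 0.
Proof.
rewrite rmorphD rmorphM /= !mmap_polyT mmapXi.
set a := (map_poly emb f0).[_]; set b := (map_poly emb f1).[_] => ab0.
have aE : a = - (g iU * b) by rewrite -[a]subr0 -ab0; ring.
pose F := f0 ^+ 2 - ('X ^+ 2 + 4%:R *: 'X) * f1 ^+ 2.
have F0 : F = 0.
  apply: gT_transcendental; rewrite /F -mul_polyC.
  rewrite !(rmorphB, rmorphM, rmorphD, rmorphXn) /= map_polyX map_polyC.
  rewrite !(hornerE, hornerXn) -/a -/b /= rmorph1 aE.
  transitivity ((g iU ^+ 2 - (g iT ^+ 2 + 4%:R * g iT)) * b ^+ 2); first ring.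
  by rewrite gU subrr mul0r.
have f1_0 : f1 = 0.
  by apply: (X2_4X_nonsquare C2 (f0 := f0)); apply/eqP; rewrite -subr_eq0 -/F F0.
split => //; apply: gT_transcendental; rewrite -/a aE /b f1_0 rmorph0 horner0.
by rewrite mulr0 oppr0.
Qed.

Lemma mmap_eq0 p : psi p = 0 <-> in_R_ideal p.
Proof.
split=> [psi_p0|]; last exact: mmap_R_ideal.
have [d [f0 [f1 Hp]]] := R_normal_form_all p.
have : psi (polyT f0 + 'X_iU * polyT f1) = 0.
  have := mmap_R_ideal Hp; rewrite rmorphB rmorphM /= psi_p0 mulr0 sub0r.
  by move/eqP; rewrite oppr_eq0 => /eqP.
case/polyT_mmap_eq0 => f0_0 f1_0.
apply: (@in_R_ideal_cancelTn _ d).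
by move: Hp; rewrite /eqmodR f0_0 f1_0 rmorph0 mulr0 addr0 subr0.
Qed.

End Kernel.

HB.instance Definition _ (C : idomainType) :=
  GRing.RMorphism.copy (@cst C) ((@FracField.tofrac {poly C}) \o (@polyC C)).

Section TauTranscendental.
Variables (C : idomainType) (rho : {poly C}) (x0 : C).
Hypotheses (rho_x0 : rho.[x0] = 1) (rho_neq1 : rho != 1).
Local Notation s := (FracField.tofrac rho).
Local Notation tau := (s^-1 * (s - 1) ^+ 2).

Lemma tofrac_rho_neq0 : s != 0.
Proof.
rewrite tofrac_eq0; apply: contra_eq_neq rho_x0 => ->.
by rewrite horner0 eq_sym oner_neq0.
Qed.

Lemma tofrac_rho_sub1_neq0 : s - 1 != 0.
Proof. by rewrite -(rmorph1 (@FracField.tofrac _)) -rmorphB tofrac_eq0 subr_eq0. Qed.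

(* Clearing denominators in F(tau) only introduces factors (rho - 1)^2,
   which vanish at x0, so the constant term of F survives at x0. *)
Lemma horner_tau_tofrac (F : {poly C}) : exists m q,
  (map_poly (@cst C) F).[tau] * s ^+ m = FracField.tofrac q /\ q.[x0] = F.[0].
Proof.
elim/poly_ind: F => [|p c [m [q [pE qx0]]]].
  by exists 0%N, 0; rewrite !rmorph0 !horner0 mul0r.
exists m.+1, (q * (rho - 1) ^+ 2 + c%:P * rho ^+ m.+1); split; last first.
  by rewrite !hornerE rho_x0 expr1n subrr /= !mulr0 add0r mulr1.
have s_neq0 := tofrac_rho_neq0.
transitivity (FracField.tofrac q * (s - 1) ^+ 2 + cst c * s ^+ m.+1); last first.
  by rewrite rmorphD !rmorphM !rmorphXn rmorphB rmorph1.
rewrite rmorphD rmorphM /= map_polyX map_polyC hornerMXaddC -pE.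
have tau_s : tau * s = (s - 1) ^+ 2 by rewrite mulrAC mulVf ?mul1r.
have tau_expS A b : (A * tau + b) * s ^+ m.+1 = A * s ^+ m * (s - 1) ^+ 2 + b * s ^+ m.+1.
  by set t := tau in tau_s *; rewrite -tau_s exprS; ring.
exact: tau_expS.
Qed.

Lemma tau_transcendental F : (map_poly (@cst C) F).[tau] = 0 -> F = 0.
Proof.
have tau_neq0 : tau != 0.
  rewrite mulf_neq0 ?expf_neq0 // ?invr_eq0.
  - exact: tofrac_rho_neq0.
  - exact: tofrac_rho_sub1_neq0.
elim/poly_ind: F => [//|p c IHp] Ftau0.
have [m [q [qE qx0]]] := horner_tau_tofrac (p * 'X + c%:P).
move: qE; rewrite Ftau0 mul0r => /esym/eqP; rewrite tofrac_eq0 => /eqP q0.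
move: qx0; rewrite q0 horner0 hornerMXaddC mulr0 add0r => c0; subst c.
move: Ftau0; rewrite rmorphD rmorphM /= map_polyX map_polyC /= hornerMXaddC.
rewrite rmorph0 addr0 => /eqP; rewrite mulf_eq0 (negbTE tau_neq0) orbF.
by move/eqP/IHp => ->; rewrite mul0r addr0.
Qed.

End TauTranscendental.

Section GenSubalgebra.
Variables (F : fieldType) (L : comNzRingType) (emb : F -> L) (gen : L -> Prop).
Local Notation SA := (in_gen_subalg emb gen).

Lemma gen_subalg_emb c : SA (emb c).
Proof. by move=> P PC _ _ _ _; apply: PC. Qed.

Lemma gen_subalg_gen x : gen x -> SA x.
Proof. by move=> gx P _ Pgen _ _ _; apply: Pgen. Qed.

Lemma gen_subalgD x y : SA x -> SA y -> SA (x + y).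
Proof.
move=> Sx Sy P PC Pg PD PN PM.
exact: PD (Sx P PC Pg PD PN PM) (Sy P PC Pg PD PN PM).
Qed.

Lemma gen_subalgN x : SA x -> SA (- x).
Proof. by move=> Sx P PC Pg PD PN PM; exact: PN (Sx P PC Pg PD PN PM). Qed.

Lemma gen_subalgM x y : SA x -> SA y -> SA (x * y).
Proof.
move=> Sx Sy P PC Pg PD PN PM.
exact: PM (Sx P PC Pg PD PN PM) (Sy P PC Pg PD PN PM).
Qed.

Lemma gen_subalgS (gen' : L -> Prop) x :
  (forall y, gen' y -> SA y) -> in_gen_subalg emb gen' x -> SA x.
Proof.
move=> gen'_SA /(_ SA); apply.
- exact: gen_subalg_emb.
- exact: gen'_SA.
- exact: gen_subalgD.
- exact: gen_subalgN.
- exact: gen_subalgM.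
Qed.

End GenSubalgebra.

Section GenSubalgebraMorph.
Variables (F : fieldType) (L : comNzRingType) (emb : {rmorphism F -> L}).
Variable gen : L -> Prop.
Local Notation SA := (in_gen_subalg emb gen).

Lemma gen_subalg1 : SA 1.
Proof. by rewrite -(rmorph1 emb); apply: gen_subalg_emb. Qed.

Lemma gen_subalgX x n : SA x -> SA (x ^+ n).
Proof.
move=> Sx; elim: n => [|n IHn]; first by rewrite expr0; apply: gen_subalg1.
by rewrite exprS; apply: gen_subalgM.
Qed.

Lemma gen_subalg_mmapP n (g : 'I_n -> L) x :
  (forall i, SA (g i)) -> (forall y, gen y -> exists p, mmap emb g p = y) ->
  SA x <-> exists p, mmap emb g p = x.
Proof.
move=> g_SA gen_im; split=> [Sx | [p <-]].
  apply: (Sx (fun y => exists p, mmap emb g p = y)) => //.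
  - by move=> c; exists c%:MP; apply: mmapC.
  - by move=> y z [p <-] [q <-]; exists (p + q); rewrite rmorphD.
  - by move=> y [p <-]; exists (- p); rewrite rmorphN.
  - by move=> y z [p <-] [q <-]; exists (p * q); rewrite rmorphM.
elim/mpoly_ind: p => [c|i|p q|p q].
- by rewrite mmapC; apply: gen_subalg_emb.
- by rewrite mmapXi.
- by rewrite rmorphD; apply: gen_subalgD.
- by rewrite rmorphM; apply: gen_subalgM.
Qed.

End GenSubalgebraMorph.

Definition Rgen (L : fieldType) (s : L) (i : 'I_3) : L :=
  if i == iT then s^-1 * (s - 1) ^+ 2
  else if i == iW then s * ((s - 1) ^+ 2)^-1
  else s - s^-1.

Definition S_gen_at (L : fieldType) (s x : L) : Prop :=
  x = s \/ x = s^-1 \/ x = (s - 1)^-1.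

Section RgenS.
Variables (C L : fieldType) (emb : {rmorphism C -> L}) (s : L).
Hypotheses (s_neq0 : s != 0) (s_sub1_neq0 : s - 1 != 0).

Lemma Rgen_TW : Rgen s iT * Rgen s iW = 1.
Proof. by rewrite /Rgen /=; field; rewrite s_neq0 s_sub1_neq0. Qed.

Lemma Rgen_U : Rgen s iU ^+ 2 = Rgen s iT ^+ 2 + 4%:R * Rgen s iT.
Proof. by rewrite /Rgen /=; field; rewrite s_neq0. Qed.

Hypothesis C2 : (2%:R : C) != 0.

Lemma S_gen_at_mmapP x :
  in_gen_subalg emb (S_gen_at s) x <-> exists p, mmap emb (Rgen s) p = x.
Proof.
have L2 : (2%:R : L) != 0 by rewrite -(rmorph_nat emb) fmorph_eq0.
have mmap_half p : mmap emb (Rgen s) ((2%:R^-1)%:MP * p) = 2%:R^-1 * mmap emb (Rgen s) p.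
  by rewrite rmorphM /= mmapC_rmorph fmorphV rmorph_nat.
have s_im : mmap emb (Rgen s) ((2%:R^-1)%:MP * ('X_iT + 2%:R + 'X_iU)) = s.
  by rewrite mmap_half !rmorphD /= rmorph1 !mmapXi /Rgen /=; field; rewrite s_neq0 L2.
have sV_im : mmap emb (Rgen s) ((2%:R^-1)%:MP * ('X_iT + 2%:R - 'X_iU)) = s^-1.
  by rewrite mmap_half rmorphB !rmorphD /= rmorph1 !mmapXi /Rgen /=; field; rewrite s_neq0 L2.
apply: gen_subalg_mmapP => [i | y [-> | [-> | ->]]].
- have Ss : in_gen_subalg emb (S_gen_at s) s by apply: gen_subalg_gen; left.
  have SsV : in_gen_subalg emb (S_gen_at s) s^-1 by apply: gen_subalg_gen; right; left.
  have Ss1V : in_gen_subalg emb (S_gen_at s) (s - 1)^-1.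
    by apply: gen_subalg_gen; right; right.
  have Ss1 : in_gen_subalg emb (S_gen_at s) (s - 1).
    by rewrite -(rmorph1 emb) -rmorphN; apply: gen_subalgD => //; apply: gen_subalg_emb.
  rewrite /Rgen; case: (i == iT); first by apply: gen_subalgM => //; apply: gen_subalgX.
  case: (i == iW); first by rewrite -exprVn; apply: gen_subalgM => //; apply: gen_subalgX.
  by apply: gen_subalgD => //; apply: gen_subalgN.
- by exists ((2%:R^-1)%:MP * ('X_iT + 2%:R + 'X_iU)).
- by exists ((2%:R^-1)%:MP * ('X_iT + 2%:R - 'X_iU)).
exists ((1 - (2%:R^-1)%:MP * ('X_iT + 2%:R - 'X_iU)) * 'X_iW).
rewrite rmorphM rmorphB rmorph1 /= sV_im mmapXi /Rgen /=.
by field; rewrite s_neq0 s_sub1_neq0.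
Qed.

End RgenS.

Definition A_gen_at (L : fieldType) (z w x : L) : Prop :=
  exists k : int, x = w ^ k \/ x = z * w ^ k.

Section AgenS.
Variables (C L : fieldType) (emb : {rmorphism C -> L}) (a : C) (z : L).
Hypotheses (C2 : (2%:R : C) != 0) (a_neq0 : a != 0).
Hypotheses (z_sub_a : z - emb a != 0) (z_add_a : z + emb a != 0).
Local Notation w := (z ^+ 2 - emb (a ^+ 2)).
Local Notation s := ((2%:R * emb a)^-1 * (z + emb a)).

Lemma A_gen_at_S_gen_at x :
  in_gen_subalg emb (A_gen_at z w) x <-> in_gen_subalg emb (S_gen_at s) x.
Proof.
have L2 : (2%:R : L) != 0 by rewrite -(rmorph_nat emb) fmorph_eq0.
have L4 : (4%:R : L) != 0 by rewrite (natrM L 2 2) mulf_neq0.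
have ea_neq0 : emb a != 0 by rewrite fmorph_eq0.
have wE : w = (z - emb a) * (z + emb a) by rewrite rmorphXn; ring.
have nz := (L2, L4, ea_neq0, z_sub_a, z_add_a).
have s_sub1E : s - 1 = (2%:R * emb a)^-1 * (z - emb a) by field; rewrite ?nz.
split; apply: gen_subalgS => y.
- set SA := in_gen_subalg emb (S_gen_at s).
  have Ss : SA s by apply: gen_subalg_gen; left.
  have SsV : SA s^-1 by apply: gen_subalg_gen; right; left.
  have Ss1V : SA (s - 1)^-1 by apply: gen_subalg_gen; right; right.
  have Sz : SA z.
    have -> : z = emb (2%:R * a) * s + emb (- a).
      by rewrite rmorphN rmorphM rmorph_nat; field; rewrite ?nz.
    by apply: gen_subalgD => //; apply: gen_subalgM.
  have Sw : SA w by apply: gen_subalgD; [apply: gen_subalgX | rewrite -rmorphN].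
  have SwV : SA w^-1.
    have -> : w^-1 = emb (4%:R * a ^+ 2)^-1 * ((s - 1)^-1 * s^-1).
      rewrite wE s_sub1E fmorphV rmorphM rmorphXn rmorph_nat.
      by field; rewrite ?nz.
    by apply: gen_subalgM => //; apply: gen_subalgM.
  have Swk k : SA (w ^ k).
    by case: k => n; rewrite /exprz -?exprVn; apply: gen_subalgX.
  by case=> k [-> | ->]; [apply: Swk | apply: gen_subalgM Sz (Swk k)].
- set SA := in_gen_subalg emb (A_gen_at z w).
  have Sz : SA z by apply: gen_subalg_gen; exists 0; right; rewrite expr0z mulr1.
  have SwV : SA w^-1 by apply: gen_subalg_gen; exists (-1); left; rewrite exprN1.
  have SzwV : SA (z * w^-1).
    by apply: gen_subalg_gen; exists (-1); right; rewrite exprN1.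
  case=> [-> | [-> | ->]].
  + have -> : s = emb (2%:R * a)^-1 * (z + emb a) by rewrite fmorphV rmorphM rmorph_nat.
    by apply: gen_subalgM => //; apply: gen_subalgD.
  + have -> : s^-1 = emb (2%:R * a) * (z * w^-1 + emb (- a) * w^-1).
      by rewrite rmorphN rmorphM rmorph_nat wE; field; rewrite ?nz.
    by apply: gen_subalgM => //; apply: gen_subalgD => //; apply: gen_subalgM.
  + have -> : (s - 1)^-1 = emb (2%:R * a) * (z * w^-1 + emb a * w^-1).
      by rewrite s_sub1E rmorphM rmorph_nat wE; field; rewrite ?nz.
    by apply: gen_subalgM => //; apply: gen_subalgD => //; apply: gen_subalgM.
Qed.

End AgenS.

Section FractionModel.
Variables (C : fieldType) (rho : {poly C}) (x0 : C).
Hypotheses (C2 : (2%:R : C) != 0) (rho_x0 : rho.[x0] = 1) (rho_neq1 : rho != 1).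
Local Notation s := (FracField.tofrac rho).

Lemma R_iso_S_gen_at :
  (forall p, mmap (@cst C) (Rgen s) p = 0 <-> in_R_ideal p) /\
  (forall x, in_gen_subalg (@cst C) (S_gen_at s) x <->
             exists p, mmap (@cst C) (Rgen s) p = x).
Proof.
have s_neq0 := tofrac_rho_neq0 rho_x0.
have s_sub1_neq0 := tofrac_rho_sub1_neq0 rho_neq1.
split=> [p | x]; last exact: (@S_gen_at_mmapP C _ (@cst C) s s_neq0 s_sub1_neq0 C2 x).
apply: mmap_eq0 => //.
- exact: (Rgen_TW s_neq0 s_sub1_neq0).
- exact: (Rgen_U s_neq0).
- exact: (tau_transcendental rho_x0 rho_neq1).
Qed.

End FractionModel.

Lemma polyX_neq1 (C : nzRingType) : ('X : {poly C}) != 1.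
Proof.
by apply/eqP => /(congr1 (fun p : {poly C} => size p)); rewrite size_polyX size_poly1.
Qed.

Lemma R_iso_S (C : fieldType) : (2%:R : C) != 0 ->
  (forall p : {mpoly C[3]}, phi p = 0 <-> in_R_ideal p) /\
  (forall x : {fraction {poly C}}, in_S x <-> exists p, phi p = x).
Proof. by move=> C2; apply: (R_iso_S_gen_at C2 (hornerX 1) (polyX_neq1 C)). Qed.

Lemma R_iso_A (C : fieldType) (a : C) : (2%:R : C) != 0 -> a != 0 ->
  exists g : {rmorphism {mpoly C[3]} -> {fraction {poly C}}},
    (forall p, g p = 0 <-> in_R_ideal p) /\ (forall x, in_A a x <-> exists p, g p = x).
Proof.
move=> C2 a_neq0.
pose rho := ((2%:R * a)^-1)%:P * ('X + a%:P).
have rho_a : rho.[a] = 1 by rewrite !hornerE -mulr2n -(mulr_natl a 2) mulVf ?mulf_neq0.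
have rho_neq1 : rho != 1.
  apply/eqP => /(congr1 (horner^~ (- a))).
  by rewrite !hornerE addNr mulr0 => /eqP; rewrite eq_sym oner_eq0.
have z_sub_a : var C - cst a != 0.
  have -> : var C - cst a = FracField.tofrac ('X - a%:P) by rewrite rmorphB.
  by rewrite tofrac_eq0 polyXsubC_eq0.
have z_add_a : var C + cst a != 0.
  have -> : var C + cst a = FracField.tofrac ('X - (- a)%:P) by rewrite polyCN opprK rmorphD.
  by rewrite tofrac_eq0 polyXsubC_eq0.
have sE : FracField.tofrac rho = (2%:R * cst a)^-1 * (var C + cst a).
  transitivity (cst ((2%:R * a)^-1) * (var C + cst a)); first by rewrite rmorphM rmorphD.
  by rewrite fmorphV rmorphM rmorph_nat.
have [kerP imP] := R_iso_S_gen_at C2 rho_a rho_neq1.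
exists (mmap (@cst C) (Rgen (FracField.tofrac rho)) : {rmorphism _ -> _}).
split=> [// | x]; rewrite -imP sE.
exact: (@A_gen_at_S_gen_at _ _ (@cst C) a (var C) C2 a_neq0 z_sub_a z_add_a x).
Qed.

Theorem mainTheorem1 (R : realType) :
  ((forall p : {mpoly R[i][3]}, phi p = 0 <-> in_R_ideal p) /\
   (forall x : {fraction {poly R[i]}}, in_S x <-> exists p, phi p = x))
  /\
  (forall a : R[i], a != 0 ->
     exists g : {rmorphism {mpoly R[i][3]} -> {fraction {poly R[i]}}},
       (forall p, g p = 0 <-> in_R_ideal p) /\
       (forall x, in_A a x <-> exists p, g p = x)).
Proof.
have C2 : (2%:R : R[i]) != 0 by rewrite pnatr_eq0.
split; first exact: R_iso_S.
by move=> a; apply: R_iso_A.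
Qed.
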